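(* Let $T$ be a finite graph such that every graph homomorphism $T\to T$ is an automorphism (i.e. $\mathrm{End}(T)=\mathrm{Aut}(T)$). If there is a path component of $\mathrm{Hom}(T,K_{\chi(T)})$ which is invariant under the action of $\mathrm{Aut}(T)$ (acting by $f\mapsto f\circ\gamma$), then there exists a graph $G$ with $\chi(G)=\chi(T)$ such that $\mathrm{Hom}(T,G)$ is non-empty and connected.
   Context: Graphs are pairs $(V(G),E(G))$ with $E(G)\subseteq V(G)\times V(G)$ a symmetric relation (loops allowed); a graph homomorphism $f\colon G\to H$ is a map $V(G)\to V(H)$ with $(f(u),f(v))\in E(H)$ for all $(u,v)\in E(G)$. $K_r$ is the complete graph on $r$ vertices without loops, $\chi$ the chromatic number. For graphs $T,G$, $\mathrm{Hom}(T,G)$ is a cell complex whose vertices are the graph homomorphisms $T\to G$, and two homomorphisms are joined by an edge if and only if they differ at exactly one vertex of $T$; path components and connectedness may be computed in the graph formed by these vertices and edges; ''connected'' means non-empty and path-connected. *)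

From mathcomp Require Import all_boot.
Set Implicit Arguments. Unset Strict Implicit. Unset Printing Implicit Defensive.

Definition sym_graph (V : finType) (e : rel V) : Prop := symmetric e.

Definition is_hom (T V : finType) (eT : rel T) (eV : rel V) (f : T -> V) : Prop :=
  forall u v, eT u v -> eV (f u) (f v).

Definition is_homb (T V : finType) (eT : rel T) (eV : rel V) (f : {ffun T -> V}) : bool :=
  [forall u, forall v, eT u v ==> eV (f u) (f v)].

Definition Kedge (n : nat) : rel 'I_n := fun x y => x != y.

Definition chromatic (T : finType) (eT : rel T) (n : nat) : Prop :=
  (exists f : T -> 'I_n, is_hom eT (@Kedge n) f) /\
  (forall m (g : T -> 'I_m), is_hom eT (@Kedge m) g -> n <= m).

Definition is_aut (T : finType) (eT : rel T) (g : T -> T) : Prop :=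
  exists h : T -> T, [/\ cancel g h, cancel h g, is_hom eT eT g & is_hom eT eT h].

(* Edges of (the 1-skeleton of) Hom(T,V): two homs differing at exactly one vertex *)
Definition hom_adj (T V : finType) (eT : rel T) (eV : rel V) : rel {ffun T -> V} :=
  fun f g => [&& is_homb eT eV f, is_homb eT eV g & #|[set x | f x != g x]| == 1].

Definition hom_conn (T V : finType) (eT : rel T) (eV : rel V) (f g : {ffun T -> V}) : bool :=
  connect (hom_adj eT eV) f g.

Definition hom_connected (T V : finType) (eT : rel T) (eV : rel V) : Prop :=
  (exists f : {ffun T -> V}, is_homb eT eV f) /\
  (forall f g : {ffun T -> V}, is_homb eT eV f -> is_homb eT eV g -> hom_conn eT eV f g).

From mathcomp Require Import all_boot zify.
Set Implicit Arguments. Unset Strict Implicit. Unset Printing Implicit Defensive.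

(* G is T with, for every endomorphism g of T, a cylinder T x [0, K] attached: level 0
   is glued to T by the identity and level K by g.  A homomorphism h : T -> G misses
   some level c of every cylinder (K >= |T|), so the cylinders cut at c deformation
   retract onto the base copy of T: moving one vertex at a time, h is connected in
   Hom(T, G) to some endomorphism psi of T, viewed in the base.  Since psi is an
   automorphism, walking psi through the cylinder of psi^-1 connects it to the
   identity.  For the colouring, the cylinder of g is coloured level by level along
   a path in Hom(T, K_n) from f0, taken in the Aut(T)-invariant component, to f0 o g;
   so G is n-colourable, and it contains T. *)

Section HomComplex.
Variables (T V : finType) (eT : rel T) (eV : rel V).
Hypotheses (symT : symmetric eT) (symV : symmetric eV).

Lemma is_hombP (f : {ffun T -> V}) : reflect (is_hom eT eV f) (is_homb eT eV f).
Proof.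
apply: (iffP forallP) => [H u v Huv | H u].
  by move: (H u) => /forallP /(_ v) /implyP; apply.
by apply/forallP => v; apply/implyP; apply: H.
Qed.

Lemma hom_adj_sym : symmetric (hom_adj eT eV).
Proof.
move=> f g; rewrite /hom_adj andbCA; congr [&& _, _ & _].
by congr (_ == 1); apply: eq_card => x; rewrite !inE eq_sym.
Qed.

Lemma hom_conn_sym (f g : {ffun T -> V}) : hom_conn eT eV f g = hom_conn eT eV g f.
Proof. by rewrite /hom_conn (sym_connect_sym hom_adj_sym). Qed.

(* f and g span a cell of Hom(T, V). *)
Definition hom_compat (f g : T -> V) := forall u v, eT u v -> eV (f u) (g v).

Lemma hom_compat_conn (f g : {ffun T -> V}) :
  is_homb eT eV f -> is_homb eT eV g -> hom_compat f g -> hom_conn eT eV f g.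
Proof.
move=> + hg; move Hd: #|[set t | f t != g t]| => d.
elim: d f Hd => [|d IH] f Hd hf fg.
  suff -> : f = g by apply: connect0.
  apply/ffunP => t; apply/eqP.
  by move/cards0_eq/setP/(_ t): Hd; rewrite !inE => /negbFE.
have [x] : exists x, x \in [set t | f t != g t] by apply/set0Pn; rewrite -card_gt0 Hd.
rewrite inE => fgx.
pose f' := [ffun t => if t == x then g x else f t].
have f'_hom : is_homb eT eV f'.
  apply/is_hombP => u v huv; rewrite !ffunE.
  case: (eqVneq u x) => [eu|_]; case: (eqVneq v x) => [ev|_].
  - by move/is_hombP: hg => /(_ u v huv); rewrite eu ev.
  - by rewrite symV; apply: fg; rewrite symT -eu.
  - by apply: fg; rewrite -ev.
  - by move/is_hombP: hf; apply.
have diff_f' : [set t | f t != f' t] = [set x].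
  by apply/setP => t; rewrite !inE ffunE; case: (eqVneq t x) => [->|_]; rewrite ?fgx ?eqxx.
apply: connect_trans (connect1 _) (IH f' _ f'_hom _).
- by rewrite /hom_adj hf f'_hom diff_f' cards1.
- have -> : [set t | f' t != g t] = [set t | f t != g t] :\ x.
    by apply/setP => t; rewrite !inE ffunE; case: (eqVneq t x) => [->|_]; rewrite ?eqxx.
  by move: Hd; rewrite (cardsD1 x) inE fgx add1n => -[].
- move=> u v huv; rewrite ffunE; case: (eqVneq u x) => [eu|_]; last exact: fg.
  by move/is_hombP: hg; apply; rewrite -eu.
Qed.

Lemma hom_adj_compat (f g : {ffun T -> V}) :
  irreflexive eT -> hom_adj eT eV f g -> hom_compat f g.
Proof.
move=> loopT /and3P[/is_hombP hf /is_hombP hg /cards1P[x Ex]] u v huv.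
have agree t : t != x -> f t = g t.
  move=> tx; apply/eqP; apply: contraNT tx => fgt.
  by rewrite -in_set1 -Ex inE.
have [vx|/agree <-] := eqVneq v x; last exact: hf.
have [ux|/agree ->] := eqVneq u x; last exact: hg.
by move: huv; rewrite ux vx loopT.
Qed.
End HomComplex.

Lemma connect_padded_walk (V : finType) (e : rel V) (x y : V) : connect e x y ->
  exists w : nat -> V, [/\ w 0 = x, forall j, #|V| <= j -> w j = y
                        & forall j, w j = w j.+1 \/ e (w j) (w j.+1)].
Proof.
case/connectP=> p0 p0_path; case: (shortenP p0_path) => p p_path p_uniq _ p_last.
exists (fun j => nth y (x :: p) j); split=> // [j|j].
  have size_p : size (x :: p) <= #|V| by rewrite -(card_uniqP p_uniq) max_card.
  move=> Vj; rewrite nth_default //; exact: leq_trans Vj.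
have [jp|pj] := ltnP j (size p).
  by right; move/pathP: p_path => /(_ y j jp).
left; have -> : nth y (x :: p) j.+1 = y by rewrite /= nth_default.
have [pj'|jp] := ltnP (size p) j; first by rewrite nth_default.
have -> : j = size p by apply/eqP; rewrite eqn_leq jp pj.
by rewrite p_last -[size p]/((size (x :: p)).-1) nth_last.
Qed.

Lemma Kedge_sym n : symmetric (@Kedge n).
Proof. by move=> x y; rewrite /Kedge eq_sym. Qed.

Section Cylinder.
Variables (T : finType) (eT : rel T) (K : nat).
Hypothesis symT : symmetric eT.

Definition endo := {g : {ffun T -> T} | is_homb eT eT g}.
Definition cyl_vertex := (T * option (endo * 'I_K.+1))%type.

(* (s, None) is the vertex s of the base copy of T, and (s, Some (g, i)) the copy of s
   at level i of the cylinder of g. *)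
Definition cyl_edge : rel cyl_vertex := fun x y =>
  let: (s, d) := x in let: (s', d') := y in
  match d, d' with
  | None, None => eT s s'
  | Some (g, i), Some (g', i') => [&& g == g', i <= i'.+1, i' <= i.+1 & eT s s']
  | Some (g, i), None => (i == 0 :> nat) && eT s s' || (i == K :> nat) && eT (val g s) s'
  | None, Some (g, i) => (i == 0 :> nat) && eT s' s || (i == K :> nat) && eT (val g s') s
  end.

Lemma cyl_edge_sym : symmetric cyl_edge.
Proof.
move=> [s [[g i]|]] [s' [[g' i']|]] //=.
by rewrite eq_sym symT; congr (_ && _); exact: andbCA.
Qed.

Definition base (psi : T -> T) : {ffun T -> cyl_vertex} := [ffun u => (psi u, None)].

Lemma base_hom (psi : T -> T) : is_hom eT eT psi -> is_homb eT cyl_edge (base psi).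
Proof. by move=> hpsi; apply/is_hombP => u v uv; rewrite !ffunE; apply: hpsi. Qed.

Definition level (g : endo) (l : nat) (s : T) : cyl_vertex := (s, Some (g, inord l)).

Lemma cyl_edge_level (g : endo) l l' s s' : l <= K -> l' <= K ->
  cyl_edge (level g l s) (level g l' s') = [&& l <= l'.+1, l' <= l.+1 & eT s s'].
Proof. by move=> lK l'K; rewrite /= eqxx !inordK. Qed.

Lemma cyl_edge_level_base (g : endo) l s s' : l <= K ->
  cyl_edge (level g l s) (s', None) = (l == 0) && eT s s' || (l == K) && eT (val g s) s'.
Proof. by move=> lK; rewrite /= !inordK. Qed.

Lemma level_ord (g : endo) (i : 'I_K.+1) s : level g i s = (s, Some (g, i)).
Proof. by rewrite /level inord_val. Qed.

Lemma endo_edge (g : endo) u v : eT u v -> eT (val g u) (val g v).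
Proof. by move=> uv; move/is_hombP: (valP g); apply. Qed.

Section Retraction.
Variable cut : 'I_K.+1.

Definition avoids_cut (x : cyl_vertex) : bool :=
  if x.2 is Some (g, i) then i != cut :> nat else true.

(* At time t the part of each cylinder below the cut is squeezed into the levels
   below cut - t, and the part above it into the levels above cut + t; a vertex pushed
   past either end falls onto the base, through the identity or through g. *)
Definition retract (t : nat) (x : cyl_vertex) : cyl_vertex :=
  let: (s, d) := x in
  if d is Some (g, i) then
    if i < cut then
      if cut <= t then (s, None) else level g (minn i (cut - t.+1)) s
    else
      if K < cut + t.+1 then (val g s, None) else level g (maxn i (cut + t.+1)) s
  else x.

Lemma retract0 x : avoids_cut x -> retract 0 x = x.
Proof.
case: x => s [[g i]|] //; rewrite /avoids_cut /= => icut.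
have iK := ltn_ord i; have cK := ltn_ord cut.
case: ltnP => [ic|ci].
  by rewrite ifF; [have -> : minn i (cut - 1) = i by lia | lia]; rewrite level_ord.
by rewrite ifF; [have -> : maxn i (cut + 1) = i by lia | lia]; rewrite level_ord.
Qed.

Lemma retract_base x : (retract K.+1 x).2 = None.
Proof.
case: x => s [[g i]|] //=; have cK := ltn_ord cut.
by case: ifP => _; rewrite ifT //; lia.
Qed.

Lemma retract_edge_base t x s' : avoids_cut x -> cyl_edge x (s', None) ->
  cyl_edge (retract t x) (s', None).
Proof.
case: x => s [[g i]|] //; rewrite /avoids_cut /= => icut.
have iK := ltn_ord i; have cK := ltn_ord cut.
case/orP=> [/andP[/eqP i0 ss'] | /andP[/eqP iK' gss']].
  rewrite ifT; last by lia.
  case: leqP => // ct; rewrite cyl_edge_level_base; last by lia.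
  by rewrite ss' andbT; apply/orP; left; lia.
rewrite ifF; last by lia.
case: ltnP => // ct; rewrite cyl_edge_level_base; last by lia.
by rewrite gss' andbT; apply/orP; right; lia.
Qed.

Lemma retract_edge_level t t' (g : endo) (i i' : 'I_K.+1) s s' :
  i != cut :> nat -> i' != cut :> nat -> i <= i'.+1 -> i' <= i.+1 -> eT s s' ->
  t <= t' <= t.+1 -> cyl_edge (retract t (s, Some (g, i))) (retract t' (s', Some (g, i'))).
Proof.
move=> icut i'cut ii' i'i ss' /andP[tt' t't]; rewrite /=.
have iK := ltn_ord i; have i'K := ltn_ord i'; have cK := ltn_ord cut.
(* adjacent levels avoiding the cut lie on the same side of it *)
case: (ltnP i cut) => ic; case: (ltnP i' cut) => i'c; try lia.
  case: (leqP cut t) => ct; case: (leqP cut t') => ct'; try lia.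
  - by rewrite /= ss'.
  - by rewrite cyl_edge_level_base ?ss' //; lia.
  - by rewrite cyl_edge_level ?ss' ?andbT; lia.
case: (ltnP K (cut + t.+1)) => ct; case: (ltnP K (cut + t'.+1)) => ct'; try lia.
- by rewrite /= endo_edge.
- by rewrite cyl_edge_level_base ?endo_edge ?orbT //; lia.
- by rewrite cyl_edge_level ?ss' ?andbT; lia.
Qed.

Lemma retract_edge t t' x y : avoids_cut x -> avoids_cut y -> cyl_edge x y ->
  t <= t' <= t.+1 -> cyl_edge (retract t x) (retract t' y).
Proof.
case: x y => s [[g i]|] [s' [[g' i']|]] xcut ycut xy tt'.
- move: xy => /and4P[/eqP <- ii' i'i ss'].
  exact: retract_edge_level.
- exact: retract_edge_base.
- by rewrite cyl_edge_sym; apply: retract_edge_base; rewrite // cyl_edge_sym.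
- exact: xy.
Qed.

Definition retract_map t (h : {ffun T -> cyl_vertex}) := [ffun u => retract t (h u)].

Lemma retract_map_hom t h : is_homb eT cyl_edge h -> (forall u, avoids_cut (h u)) ->
  is_homb eT cyl_edge (retract_map t h).
Proof.
move=> /is_hombP hh hcut; apply/is_hombP => u v uv; rewrite !ffunE.
by apply: retract_edge; rewrite ?hh ?leqnSn ?leqnn.
Qed.

Lemma hom_conn_retract t h : is_homb eT cyl_edge h -> (forall u, avoids_cut (h u)) ->
  hom_conn eT cyl_edge h (retract_map t h).
Proof.
move=> hh hcut; elim: t => [|t IH].
  suff -> : retract_map 0 h = h by apply: connect0.
  by apply/ffunP => u; rewrite ffunE retract0.
apply: connect_trans IH (hom_compat_conn symT cyl_edge_sym _ _ _);
  rewrite ?retract_map_hom // => u v uv; rewrite !ffunE.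
by apply: retract_edge; rewrite ?leqnSn ?leqnn //; move/is_hombP: hh; apply.
Qed.

Lemma hom_conn_retract_base h : is_homb eT cyl_edge h -> (forall u, avoids_cut (h u)) ->
  exists2 psi, is_hom eT eT psi & hom_conn eT cyl_edge h (base psi).
Proof.
move=> hh hcut; pose psi u := (retract K.+1 (h u)).1.
have base_psi : base psi = retract_map K.+1 h.
  apply/ffunP => u; rewrite !ffunE /psi.
  by case: retract (retract_base (h u)) => a d /= ->.
exists psi => [u v uv|]; last by rewrite base_psi hom_conn_retract.
by move/is_hombP: (retract_map_hom K.+1 hh hcut) => /(_ u v uv); rewrite -base_psi !ffunE.
Qed.

End Retraction.

Lemma exists_free_level (h : T -> cyl_vertex) : #|T| <= K ->
  exists cut, forall u, avoids_cut cut (h u).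
Proof.
move=> TK; pose lev u : 'I_K.+1 := if (h u).2 is Some (_, i) then i else ord0.
have [cut cut_free] : exists cut, cut \notin codom lev.
  apply/existsP; apply: contraTT TK => /existsPn lev_onto; rewrite -ltnNge.
  apply: leq_trans (leq_image_card lev T); rewrite -{1}(card_ord K.+1).
  by apply/subset_leq_card/subsetP => j _; apply: negbNE (lev_onto j).
exists cut => u; rewrite /avoids_cut; case E: (h u).2 => [[g i]|] //.
apply: contraNneq cut_free => /val_inj <-.
by apply/codomP; exists u; rewrite /lev E.
Qed.

Lemma hom_conn_base_id psi : 0 < K -> (forall g, is_hom eT eT g -> is_aut eT g) ->
  is_hom eT eT psi -> hom_conn eT cyl_edge (base psi) (base id).
Proof.
move=> K_gt0 endo_aut hpsi; have [phi [psiK phiK _ hphi]] := endo_aut _ hpsi.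
have phi_endo : is_homb eT eT [ffun u => phi u].
  by apply/is_hombP => u v uv; rewrite !ffunE; apply: hphi.
pose layer l := [ffun u => level (exist _ [ffun u => phi u] phi_endo : endo) l (psi u)].
have layer_hom l : l <= K -> is_homb eT cyl_edge (layer l).
  by move=> lK; apply/is_hombP => u v uv; rewrite !ffunE cyl_edge_level // !leqnSn hpsi.
(* Cutting the cylinder of psi^-1 at level 0, the layer above the cut retracts
   through psi^-1 onto the identity. *)
have <- : retract_map ord0 K.+1 (layer 1) = base id.
  by apply/ffunP => u; rewrite !ffunE /= inordK // ifT ?ffunE ?psiK //; lia.
have layer0 := layer_hom 0 (leq0n K); have layer1 := layer_hom 1 K_gt0.
apply: connect_trans (hom_compat_conn symT cyl_edge_sym (base_hom hpsi) layer0 _) _.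
  move=> u v uv; rewrite !ffunE cyl_edge_sym cyl_edge_level_base //= hpsi //.
  by rewrite symT.
apply: connect_trans (hom_compat_conn symT cyl_edge_sym layer0 layer1 _) _.
  by move=> u v uv; rewrite !ffunE cyl_edge_level // hpsi.
by apply: hom_conn_retract => // u; rewrite ffunE /avoids_cut /= inordK.
Qed.

Lemma cyl_hom_connected : #|T| < K -> (forall g, is_hom eT eT g -> is_aut eT g) ->
  hom_connected eT cyl_edge.
Proof.
move=> TK endo_aut; have K_gt0 : 0 < K by apply: leq_ltn_trans TK.
have to_id h : is_homb eT cyl_edge h -> hom_conn eT cyl_edge h (base id).
  move=> hh; have [cut hcut] := exists_free_level h (ltnW TK).
  have [psi hpsi h_psi] := hom_conn_retract_base hh hcut.
  exact: connect_trans h_psi (hom_conn_base_id K_gt0 endo_aut hpsi).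
split=> [|f g hf hg]; first by exists (base id); apply: base_hom.
by have := to_id g hg; rewrite hom_conn_sym; apply: connect_trans (to_id f hf).
Qed.

Section Colouring.
Variables (n : nat) (f0 : {ffun T -> 'I_n}).
Hypotheses (loopT : irreflexive eT) (f0_hom : is_homb eT (@Kedge n) f0).
Hypothesis f0_conn : forall g : endo, hom_conn eT (@Kedge n) f0 [ffun u => f0 (val g u)].
Hypothesis homs_K : #|{ffun T -> 'I_n}| <= K.

(* Level i of the cylinder of g is coloured by the (i+1)-st colouring of a walk from
   f0 to f0 \o g; the walk has reached f0 \o g by level K, where the cylinder is
   glued to the base through g. *)
Lemma cyl_colouring : exists kappa : cyl_vertex -> 'I_n, is_hom cyl_edge (@Kedge n) kappa.
Proof.
have [w walk] := fin_all_exists (fun g : endo => connect_padded_walk (f0_conn g)).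
have w_hom g j : is_homb eT (@Kedge n) (w g j).
  have [w0 _ w_step] := walk g; elim: j => [|j IH]; first by rewrite w0.
  by case: (w_step j) => [<- // | /and3P[]].
have w_compat g j : hom_compat eT (@Kedge n) (w g j) (w g j.+1).
  have [_ _ w_step] := walk g; case: (w_step j) => [<-|]; last exact: hom_adj_compat.
  exact/is_hombP.
have w_compat' g j j' : j <= j'.+1 -> j' <= j.+1 -> hom_compat eT (@Kedge n) (w g j) (w g j').
  move=> jj' j'j; have [->|[->|->]] : j' = j \/ j' = j.+1 \/ j = j'.+1 by lia.
  - exact/is_hombP.
  - exact: w_compat.
  - by move=> u v uv; rewrite Kedge_sym; apply: w_compat; rewrite symT.
pose kappa (x : cyl_vertex) := if x.2 is Some (g, i) then w g i.+1 x.1 else f0 x.1.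
have kappa_base g (i : 'I_K.+1) s s' : cyl_edge (s, Some (g, i)) (s', None) ->
    Kedge (kappa (s, Some (g, i))) (kappa (s', None)).
  have [w0 w_end _] := walk g; rewrite /kappa /=.
  case/orP=> [/andP[/eqP -> ss'] | /andP[/eqP -> gss']].
    by rewrite -w0; apply: w_compat'.
  rewrite w_end ?ffunE; last exact: leqW.
  by move/is_hombP: f0_hom; apply.
exists kappa => -[s [[g i]|]] [s' [[g' i']|]].
- by case/and4P=> /eqP <- ii' i'i ss'; apply: w_compat'.
- exact: kappa_base.
- by rewrite cyl_edge_sym Kedge_sym; apply: kappa_base.
- by move/is_hombP: f0_hom; apply.
Qed.

End Colouring.
End Cylinder.

Theorem theorem3p1 (T : finType) (eT : rel T) (n : nat) :
  sym_graph eT ->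
  (forall g : T -> T, is_hom eT eT g -> is_aut eT g) ->
  chromatic eT n ->
  (exists f : {ffun T -> 'I_n}, is_homb eT (@Kedge n) f /\
     forall gam : T -> T, is_aut eT gam ->
     forall g : {ffun T -> 'I_n}, hom_conn eT (@Kedge n) f g ->
       hom_conn eT (@Kedge n) f [ffun x => g (gam x)]) ->
  exists (G : finType) (eG : rel G),
    [/\ sym_graph eG, chromatic eG n & hom_connected eT eG].
Proof.
move=> symT endo_aut [[col col_hom] chi_min] [f0 [f0_hom f0_inv]].
have loopT : irreflexive eT by move=> u; apply/negP => /col_hom; rewrite /Kedge eqxx.
have f0_conn (g : endo eT) : hom_conn eT (@Kedge n) f0 [ffun u => f0 (val g u)].
  by apply: f0_inv (connect0 _ _); apply/endo_aut/is_hombP/(valP g).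
pose K := #|T| + #|{ffun T -> 'I_n}|.+1.
exists (cyl_vertex eT K), (@cyl_edge T eT K); split.
- exact: cyl_edge_sym.
- split; first by apply: cyl_colouring f0_conn _; rewrite // /K; lia.
  move=> m kappa kappa_hom; apply: (chi_min m (fun u => kappa (u, None))).
  by move=> u v uv; apply: kappa_hom.
- by apply: cyl_hom_connected; rewrite // /K; lia.
Qed.
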